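(* Let $0<\alpha\le 1$ and let $G$ be the differential (Helmholtz) filter on $L^2(\Omega)^d$ with filter radius $\delta>0$. Then the operators $D_\alpha=[(1-\alpha)G+\alpha I]^{-1}$, $D_\alpha G$ and $I-D_\alpha G$ are bounded linear operators on $L^2(\Omega)^d$, and $$\|D_\alpha\|\le\frac{1}{\alpha},\qquad \|D_\alpha G\|\le 1,\qquad \|I-D_\alpha G\|\le 1,$$ where $\|\cdot\|$ denotes the operator norm induced by the $L^2(\Omega)^d$ norm.
   Context: Let $\Omega\subset\mathbb{R}^n$ be a regular, bounded, polyhedral domain, $d\ge1$, and let $\|\cdot\|$, $(\cdot,\cdot)$ denote the $L^2(\Omega)^d$ norm and inner product. Let $X=H^1_0(\Omega)^d$. Fix $\delta>0$. The differential filter $G:L^2(\Omega)^d\to X$ is defined by $Gu=\bar u$, where $\bar u\in X$ is the unique solution of $\delta^2(\nabla\bar u,\nabla v)+(\bar u,v)=(u,v)$ for all $v\in X$ (the weak form of $-\delta^2\Delta\bar u+\bar u=u$ in $\Omega$, $\bar u=0$ on $\partial\Omega$). Regarded as an operator on $L^2(\Omega)^d$, $G$ is bounded, self-adjoint, injective and satisfies $0\le (Gv,v)\le \|v\|^2$. *)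

From HB Require Import structures.
From mathcomp Require Import all_boot all_order all_algebra.
From mathcomp Require Import reals.
Set Implicit Arguments. Unset Strict Implicit. Unset Printing Implicit Defensive.
Import Order.TTheory GRing.Theory Num.Theory.
Local Open Scope ring_scope.

Section Hilbert.
Variables (R : realType) (V : lmodType R).

Definition is_inner_product (ip : V -> V -> R) : Prop :=
  [/\ forall (a : R) (u v w : V), ip (a *: u + v) w = a * ip u w + ip v w,
      forall u v : V, ip u v = ip v u,
      forall v : V, 0 <= ip v v
    & forall v : V, ip v v = 0 -> v = 0].

Definition hnorm (ip : V -> V -> R) (v : V) : R := Num.sqrt (ip v v).

Definition ip_complete (ip : V -> V -> R) : Prop :=
  forall u : nat -> V,
    (forall e : R, 0 < e -> exists N : nat, forall m n : nat,
        (N <= m)%N -> (N <= n)%N -> hnorm ip (u m - u n) < e) ->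
    exists l : V, forall e : R, 0 < e -> exists N : nat, forall n : nat,
        (N <= n)%N -> hnorm ip (u n - l) < e.

Definition is_linear_op (T : V -> V) : Prop :=
  forall (a : R) (u v : V), T (a *: u + v) = a *: T u + T v.

Definition bounded_linear_op (ip : V -> V -> R) (T : V -> V) : Prop :=
  is_linear_op T /\ exists C : R, forall v : V, hnorm ip (T v) <= C * hnorm ip v.

(* ||T|| <= c for the induced operator norm ||T|| = sup_{v <> 0} ||Tv||/||v||,
   written out: ||T v|| <= c ||v|| for all v. *)
Definition opnorm_le (ip : V -> V -> R) (T : V -> V) (c : R) : Prop :=
  forall v : V, hnorm ip (T v) <= c * hnorm ip v.

Definition self_adjoint (ip : V -> V -> R) (T : V -> V) : Prop :=
  forall u v : V, ip (T u) v = ip u (T v).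

End Hilbert.

(* Write A := (1 - alpha) G + alpha I and n := (x, x), p := (G x, x), g := (G x, G x).
   Since G is self-adjoint with 0 <= G <= I, the Cauchy-Schwarz inequality for the positive
   form (u, v) |-> (G u, v) gives g <= p <= n, and (A x, A x) is a combination of g, p, n with
   nonnegative coefficients.  This yields alpha^2 n <= |A x|^2 <= n, |G x| <= |A x| and
   |A x - G x| <= |A x|.  The lower bound makes A injective with |A^-1| <= 1/alpha; A is onto
   because x |-> x - alpha A x + alpha f is a contraction of ratio sqrt (1 - alpha^2), whose
   fixed point solves A x = f.  As A commutes with G, so does D := A^-1, and with w := D v the
   bounds on D G and I - D G are the bounds |G w| <= |A w| and |A w - G w| <= |A w|. *)

From HB Require Import structures.
From mathcomp Require Import all_boot all_order all_algebra.
From mathcomp Require Import reals sequences normedtype.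
From mathcomp Require Import ring lra.
Set Implicit Arguments. Unset Strict Implicit. Unset Printing Implicit Defensive.
Import Order.TTheory GRing.Theory Num.Theory numFieldNormedType.Exports.
Local Open Scope ring_scope.

Section SymmetricForm.
Variables (R : realFieldType) (V : lmodType R) (b : V -> V -> R).
Hypothesis b_linl : forall (a : R) (u v w : V), b (a *: u + v) w = a * b u w + b v w.
Hypothesis b_sym : forall u v : V, b u v = b v u.

Lemma form0l w : b 0 w = 0.
Proof. by have := b_linl 1 0 0 w; rewrite scale1r addr0 mul1r; lra. Qed.

Lemma formZl a x w : b (a *: x) w = a * b x w.
Proof. by have := b_linl a x 0 w; rewrite addr0 form0l addr0. Qed.

Lemma formDl x y w : b (x + y) w = b x w + b y w.
Proof. by have := b_linl 1 x y w; rewrite scale1r mul1r. Qed.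

Lemma formDr x y w : b w (x + y) = b w x + b w y.
Proof. by rewrite b_sym formDl !(b_sym w). Qed.

Lemma formZr a x w : b w (a *: x) = a * b w x.
Proof. by rewrite b_sym formZl (b_sym w). Qed.

Lemma form_lincomb a c x y : b (a *: x + c *: y) (a *: x + c *: y) =
  a ^+ 2 * b x x + 2 * a * c * b x y + c ^+ 2 * b y y.
Proof. by rewrite !(formDl, formZl, formDr, formZr) (b_sym y x); ring. Qed.

Hypothesis b_ge0 : forall v, 0 <= b v v.

Lemma form_CauchySchwarz x y : b x y ^+ 2 <= b x x * b y y.
Proof.
have := b_ge0 y; rewrite le0r => /orP[/eqP yy0 | yy_gt0]; last first.
  by have := b_ge0 (b y y *: x + (- b x y) *: y); rewrite form_lincomb; nra.
have := b_ge0 x; rewrite le0r => /orP[/eqP xx0 | xx_gt0]; last first.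
  by have := b_ge0 ((- b x y) *: x + b x x *: y); rewrite form_lincomb; nra.
by have := b_ge0 (1 *: x + (- b x y) *: y); rewrite form_lincomb xx0 yy0; nra.
Qed.

End SymmetricForm.

Section LinearOperator.
Variables (R : realType) (V : lmodType R) (T : V -> V).
Hypothesis T_lin : is_linear_op T.

Lemma lin_op0 : T 0 = 0.
Proof.
have := T_lin 1 0 0; rewrite !scale1r addr0 => T00.
by apply: (@addrI _ (T 0)); rewrite addr0 -T00.
Qed.

Lemma lin_opZ a x : T (a *: x) = a *: T x.
Proof. by have := T_lin a x 0; rewrite addr0 lin_op0 addr0. Qed.

Lemma lin_opD x y : T (x + y) = T x + T y.
Proof. by have := T_lin 1 x y; rewrite !scale1r. Qed.

Lemma lin_opB x y : T (x - y) = T x - T y.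
Proof. by rewrite lin_opD -scaleN1r lin_opZ scaleN1r. Qed.

Lemma lin_op_id_sub : is_linear_op (fun v => v - T v).
Proof. by move=> a u v; rewrite T_lin scalerBr opprD addrACA. Qed.

End LinearOperator.

Lemma lin_op_comp (R : realType) (V : lmodType R) (S T : V -> V) :
  is_linear_op S -> is_linear_op T -> is_linear_op (fun v => S (T v)).
Proof. by move=> S_lin T_lin a u v; rewrite T_lin S_lin. Qed.

Lemma exists_expr_lt (R : archiRealFieldType) (q e : R) : 0 <= q < 1 -> 0 < e ->
  exists N : nat, q ^+ N < e.
Proof.
case/andP=> q_ge0 q_lt1 e_gt0.
have q_norm_lt1 : `|q| < 1 by rewrite ger0_norm.
have [N _ qN_lt] := cvgr0_norm_lt _ (cvg_expr q_norm_lt1) e e_gt0.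
by exists N; have := qN_lt N (leqnn N); rewrite /= ger0_norm ?exprn_ge0.
Qed.

Section InnerProductSpace.
Variables (R : realType) (V : lmodType R) (ip : V -> V -> R).
Hypothesis ip_inner : is_inner_product ip.

Lemma ip_linl a u v w : ip (a *: u + v) w = a * ip u w + ip v w.
Proof. by case: ip_inner => ->. Qed.

Lemma ip_sym u v : ip u v = ip v u.
Proof. by case: ip_inner => _ ->. Qed.

Lemma ip_ge0 v : 0 <= ip v v.
Proof. by case: ip_inner => _ _ ->. Qed.

Lemma ip_eq0 v : ip v v = 0 -> v = 0.
Proof. by case: ip_inner => _ _ _ /(_ v). Qed.

Lemma hnorm_ge0 x : 0 <= hnorm ip x.
Proof. exact: sqrtr_ge0. Qed.

Lemma sqr_hnorm x : hnorm ip x ^+ 2 = ip x x.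
Proof. exact/sqr_sqrtr/ip_ge0. Qed.

Lemma hnorm0 : hnorm ip 0 = 0.
Proof. by rewrite /hnorm (form0l ip_linl) sqrtr0. Qed.

Lemma hnorm_le x c : 0 <= c -> (hnorm ip x <= c) = (ip x x <= c ^+ 2).
Proof. by move=> c_ge0; rewrite -[c in LHS]ger0_norm // -sqrtr_sqr ler_sqrt ?sqr_ge0. Qed.

Lemma hnorm_le_of_ip x y k : 0 <= k -> ip x x <= k ^+ 2 * ip y y ->
  hnorm ip x <= k * hnorm ip y.
Proof.
by move=> k_ge0; rewrite hnorm_le ?mulr_ge0 ?hnorm_ge0 // exprMn sqr_hnorm.
Qed.

Lemma hnormN x : hnorm ip (- x) = hnorm ip x.
Proof.
rewrite /hnorm -scaleN1r (formZl ip_linl) (formZr ip_linl ip_sym).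
by rewrite mulrA mulN1r opprK mul1r.
Qed.

Lemma hnorm_distC x y : hnorm ip (x - y) = hnorm ip (y - x).
Proof. by rewrite -opprB hnormN. Qed.

Lemma ler_hnormD x y : hnorm ip (x + y) <= hnorm ip x + hnorm ip y.
Proof.
have hx := hnorm_ge0 x; have hy := hnorm_ge0 y.
have xx := sqr_hnorm x; have yy := sqr_hnorm y.
have CS := form_CauchySchwarz ip_linl ip_sym ip_ge0 x y.
rewrite hnorm_le ?addr_ge0 //.
have -> : x + y = 1 *: x + 1 *: y by rewrite !scale1r.
rewrite (form_lincomb ip_linl ip_sym).
have xy_le : ip x y <= hnorm ip x * hnorm ip y.
  have : ip x y ^+ 2 <= (hnorm ip x * hnorm ip y) ^+ 2 by rewrite exprMn xx yy.
  have := mulr_ge0 hx hy; nra.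
nra.
Qed.

Lemma hnorm_lt_eq0 x : (forall e, 0 < e -> hnorm ip x < e) -> x = 0.
Proof.
move=> x_small; apply: ip_eq0; apply/eqP; rewrite eq_le ip_ge0 andbT.
rewrite -sqr_hnorm; have := hnorm_ge0 x; rewrite le0r => /orP[/eqP -> | x_gt0].
  by rewrite expr0n.
by have := x_small _ x_gt0; rewrite ltxx.
Qed.

Section Contraction.
Hypothesis ip_cplt : ip_complete ip.
Variables (F : V -> V) (q : R).
Hypotheses (q_ge0 : 0 <= q) (q_lt1 : q < 1).
Hypothesis F_contr : forall x y, hnorm ip (F x - F y) <= q * hnorm ip (x - y).

Lemma iter_contraction_shift x n j :
  hnorm ip (iter (n + j) F x - iter n F x) <= q ^+ n * hnorm ip (iter j F x - x).
Proof.
elim: n => [|n IH]; first by rewrite expr0 mul1r.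
rewrite addSn !iterS; apply: le_trans (F_contr _ _) _.
by rewrite exprS -mulrA ler_wpM2l.
Qed.

Lemma iter_contraction_bound x j :
  hnorm ip (iter j F x - x) <= hnorm ip (F x - x) / (1 - q).
Proof.
set B := _ / _; have B_ge0 : 0 <= B by rewrite divr_ge0 ?hnorm_ge0 ?subr_ge0 ?ltW.
have B_eq : q * B + hnorm ip (F x - x) = B.
  by rewrite /B; field; rewrite subr_eq0 eq_sym lt_eqF.
elim: j => [|j IH]; first by rewrite subrr hnorm0.
rewrite iterS -[X in X - x](subrK (F x)) -addrA.
apply: le_trans (ler_hnormD _ _) _; rewrite -B_eq lerD2r.
apply: le_trans (F_contr _ _) _; exact: ler_wpM2l.
Qed.

Lemma iter_contraction_cauchy x (e : R) : 0 < e -> exists N : nat, forall m n : nat,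
  (N <= m)%N -> (N <= n)%N -> hnorm ip (iter m F x - iter n F x) < e.
Proof.
move=> e_gt0; set B := hnorm ip (F x - x) / (1 - q).
have B_ge0 : 0 <= B := le_trans (hnorm_ge0 _) (iter_contraction_bound x 0).
have [N qN_lt] : exists N, q ^+ N < e / (B + 1).
  by apply: exists_expr_lt; rewrite ?q_ge0 ?q_lt1 ?divr_gt0 //; lra.
have qNB_lt : q ^+ N * B < e.
  rewrite ltr_pdivlMr in qN_lt; last by lra.
  have := exprn_ge0 N q_ge0; nra.
have shift_lt n j : (N <= n)%N -> hnorm ip (iter (n + j) F x - iter n F x) < e.
  move=> Nn; apply: le_lt_trans (iter_contraction_shift x n j) _.
  apply: le_lt_trans qNB_lt; apply: ler_pM; rewrite ?exprn_ge0 ?hnorm_ge0 //.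
    exact: ler_wiXn2l q_ge0 (ltW q_lt1) _ _ Nn.
  exact: iter_contraction_bound.
exists N => m n Nm Nn; wlog nm : m n Nm Nn / (n <= m)%N => [wlog_nm|].
  by case/orP: (leq_total n m) => [|mn]; [|rewrite hnorm_distC]; apply: wlog_nm.
by rewrite -(subnKC nm); apply: shift_lt.
Qed.

Lemma contraction_fixed_point : exists l, F l = l.
Proof.
have [l iter_cvg] := ip_cplt (iter_contraction_cauchy 0).
exists l; apply/eqP; rewrite -subr_eq0; apply/eqP/hnorm_lt_eq0 => e e_gt0.
have e2_gt0 : 0 < e / 2 by rewrite divr_gt0.
have [N near_l] := iter_cvg (e / 2) e2_gt0.
have := near_l N.+1 (leqnSn N); have := near_l N (leqnn N).
rewrite iterS; set u := iter N F 0 => uN_near uN1_near.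
have -> : F l - l = (F l - F u) + (F u - l) by rewrite addrA subrK.
apply: le_lt_trans (ler_hnormD _ _) _.
have := F_contr l u; rewrite [hnorm ip (l - u)]hnorm_distC.
have : q * hnorm ip (u - l) <= hnorm ip (u - l) by rewrite ler_piMl ?hnorm_ge0 ?ltW.
lra.
Qed.

End Contraction.

End InnerProductSpace.

Lemma opnorm_le_bounded (R : realType) (V : lmodType R) (ip : V -> V -> R) T c :
  is_linear_op T -> opnorm_le ip T c -> bounded_linear_op ip T.
Proof. by move=> T_lin T_le; split; last exists c. Qed.

Section ConvexFilter.
Variables (R : realType) (V : lmodType R) (ip : V -> V -> R) (G : V -> V) (alpha : R).
Hypothesis ip_inner : is_inner_product ip.
Hypothesis ip_cplt : ip_complete ip.
Hypothesis G_lin : is_linear_op G.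
Hypothesis G_sa : self_adjoint ip G.
Hypothesis G_pos : forall v, 0 <= ip (G v) v /\ ip (G v) v <= hnorm ip v ^+ 2.
Hypotheses (alpha_gt0 : 0 < alpha) (alpha_le1 : alpha <= 1).

Let ip_lincomb := form_lincomb (ip_linl ip_inner) (ip_sym ip_inner).

Lemma ip_G_ge0 x : 0 <= ip (G x) x.
Proof. by case: (G_pos x). Qed.

Lemma ip_G_le x : ip (G x) x <= ip x x.
Proof. by rewrite -(sqr_hnorm ip_inner x); case: (G_pos x). Qed.

Lemma ip_GG_le x : ip (G x) (G x) <= ip (G x) x.
Proof.
have G_form_linl a u v w : ip (G (a *: u + v)) w = a * ip (G u) w + ip (G v) w.
  by rewrite G_lin (ip_linl ip_inner).
have G_form_sym u v : ip (G u) v = ip (G v) u by rewrite G_sa (ip_sym ip_inner).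
have := form_CauchySchwarz G_form_linl G_form_sym ip_G_ge0 x (G x).
have := ip_G_le (G x); have := ip_G_ge0 (G x); have := ip_G_ge0 x.
nra.
Qed.

Definition convex_filter v := (1 - alpha) *: G v + alpha *: v.

Lemma convex_filter_lin : is_linear_op convex_filter.
Proof.
move=> a u v; rewrite /convex_filter G_lin !scalerDr !scalerA.
by rewrite (mulrC (1 - alpha)) (mulrC alpha) -!scalerA addrACA.
Qed.

Lemma convex_filter_G_comm x : G (convex_filter x) = convex_filter (G x).
Proof. by rewrite /convex_filter (lin_opD G_lin) !(lin_opZ G_lin). Qed.

Lemma ip_convex_filter x : ip (convex_filter x) (convex_filter x) =
  (1 - alpha) ^+ 2 * ip (G x) (G x) + 2 * (1 - alpha) * alpha * ip (G x) x
  + alpha ^+ 2 * ip x x.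
Proof. exact: ip_lincomb. Qed.

Let alpha_mix_ge0 : 0 <= (1 - alpha) * alpha.
Proof. by rewrite mulr_ge0 ?subr_ge0 // ltW. Qed.

Lemma ip_convex_filter_le x : ip (convex_filter x) (convex_filter x) <= ip x x.
Proof.
rewrite ip_convex_filter.
have gp := ip_GG_le x; have pn := ip_G_le x.
have := ler_wpM2l (sqr_ge0 (1 - alpha)) (le_trans gp pn).
have := ler_wpM2l alpha_mix_ge0 pn.
nra.
Qed.

Lemma hnorm_convex_filter_ge x : hnorm ip x <= alpha^-1 * hnorm ip (convex_filter x).
Proof.
apply: (hnorm_le_of_ip ip_inner); first by rewrite invr_ge0 ltW.
rewrite exprVn ler_pdivlMl ?exprn_gt0 // ip_convex_filter.
have := mulr_ge0 (sqr_ge0 (1 - alpha)) (ip_ge0 ip_inner (G x)).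
have := mulr_ge0 alpha_mix_ge0 (ip_G_ge0 x).
nra.
Qed.

Lemma hnorm_G_le_convex_filter x : hnorm ip (G x) <= hnorm ip (convex_filter x).
Proof.
rewrite -[hnorm ip (convex_filter x)]mul1r; apply: (hnorm_le_of_ip ip_inner) => //.
rewrite expr1n mul1r ip_convex_filter.
have gp := ip_GG_le x; have pn := ip_G_le x.
have := ler_wpM2l alpha_mix_ge0 gp.
have := ler_wpM2l (sqr_ge0 alpha) (le_trans gp pn).
nra.
Qed.

Lemma hnorm_convex_filter_subG_le x :
  hnorm ip (convex_filter x - G x) <= hnorm ip (convex_filter x).
Proof.
rewrite -[hnorm ip (convex_filter x)]mul1r; apply: (hnorm_le_of_ip ip_inner) => //.
have -> : convex_filter x - G x = (- alpha) *: G x + alpha *: x.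
  rewrite /convex_filter scalerBl scale1r addrAC [G x - _ - G x]addrAC.
  by rewrite subrr add0r scaleNr.
rewrite expr1n mul1r ip_lincomb ip_convex_filter.
have := ler_wpM2l (ltW alpha_gt0) (ip_GG_le x); have := ip_ge0 ip_inner (G x).
nra.
Qed.

Lemma convex_filter_inj : injective convex_filter.
Proof.
move=> x y Axy; apply/eqP; rewrite -subr_eq0; apply/eqP/(hnorm_lt_eq0 ip_inner) => e e_gt0.
apply: le_lt_trans (hnorm_convex_filter_ge _) _.
by rewrite (lin_opB convex_filter_lin) Axy subrr (hnorm0 ip_inner) mulr0.
Qed.

Lemma ip_sub_convex_filter_le x :
  ip (x - alpha *: convex_filter x) (x - alpha *: convex_filter x)
    <= (1 - alpha ^+ 2) * ip x x.
Proof.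
rewrite -[x in x - _]scale1r -scaleNr ip_lincomb.
have -> : ip x (convex_filter x) = (1 - alpha) * ip (G x) x + alpha * ip x x.
  rewrite (ip_sym ip_inner) /convex_filter.
  by rewrite (formDl (ip_linl ip_inner)) !(formZl (ip_linl ip_inner)).
have := ler_wpM2l (sqr_ge0 alpha) (ip_convex_filter_le x).
have := mulr_ge0 alpha_mix_ge0 (ip_G_ge0 x).
nra.
Qed.

Lemma convex_filter_surj f : exists v, convex_filter v == f.
Proof.
pose K x := x - alpha *: convex_filter x.
have K_diff x y : K x - K y = K (x - y).
  by rewrite /K (lin_opB convex_filter_lin) scalerBr !opprD !opprK addrACA.
pose q := Num.sqrt (1 - alpha ^+ 2).
have sqr_q : q ^+ 2 = 1 - alpha ^+ 2.
  by rewrite sqr_sqrtr // subr_ge0 expr_le1 // ltW.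
have q_lt1 : q < 1 by rewrite -sqrtr1 ltr_sqrt // gtrDl oppr_lt0 exprn_gt0.
have K_contr x y :
    hnorm ip ((K x + alpha *: f) - (K y + alpha *: f)) <= q * hnorm ip (x - y).
  rewrite opprD addrACA subrr addr0 K_diff.
  apply: (hnorm_le_of_ip ip_inner); first exact: sqrtr_ge0.
  by rewrite sqr_q; apply: ip_sub_convex_filter_le.
have [l Kl] := contraction_fixed_point ip_inner ip_cplt
  (F := fun x => K x + alpha *: f) (sqrtr_ge0 _) q_lt1 K_contr.
exists l; move: Kl => /eqP.
rewrite /K -subr_eq0 addrAC [l - _ - l]addrAC subrr add0r addrC -scalerBr.
by rewrite scaler_eq0 (gt_eqF alpha_gt0) /= subr_eq0 eq_sym.
Qed.

Definition convex_filter_inv f := xchoose (convex_filter_surj f).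

Lemma convex_filter_invK : cancel convex_filter_inv convex_filter.
Proof. by move=> f; apply/eqP/(xchooseP (convex_filter_surj f)). Qed.

Lemma convex_filterK : cancel convex_filter convex_filter_inv.
Proof. by move=> v; apply: convex_filter_inj; rewrite convex_filter_invK. Qed.

Lemma convex_filter_inv_lin : is_linear_op convex_filter_inv.
Proof.
by move=> a u v; apply: convex_filter_inj; rewrite convex_filter_lin !convex_filter_invK.
Qed.

Lemma convex_filter_inv_G_comm v : convex_filter_inv (G v) = G (convex_filter_inv v).
Proof.
by apply: convex_filter_inj; rewrite -convex_filter_G_comm !convex_filter_invK.
Qed.

Lemma opnorm_convex_filter_inv : opnorm_le ip convex_filter_inv alpha^-1.
Proof.
by move=> v; have := hnorm_convex_filter_ge (convex_filter_inv v); rewrite convex_filter_invK.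
Qed.

Lemma opnorm_convex_filter_inv_G : opnorm_le ip (fun v => convex_filter_inv (G v)) 1.
Proof.
move=> v; rewrite mul1r convex_filter_inv_G_comm.
by have := hnorm_G_le_convex_filter (convex_filter_inv v); rewrite convex_filter_invK.
Qed.

Lemma opnorm_id_sub_convex_filter_inv_G :
  opnorm_le ip (fun v => v - convex_filter_inv (G v)) 1.
Proof.
move=> v; rewrite mul1r convex_filter_inv_G_comm.
by have := hnorm_convex_filter_subG_le (convex_filter_inv v); rewrite convex_filter_invK.
Qed.

End ConvexFilter.

Theorem mainTheorem2 (R : realType) (V : lmodType R) (ip : V -> V -> R)
  (Hip : is_inner_product ip) (Hcomplete : ip_complete ip)
  (G : V -> V)
  (HGbdd : bounded_linear_op ip G)
  (HGsa : self_adjoint ip G)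
  (HGinj : injective G)
  (HGpos : forall v : V, 0 <= ip (G v) v /\ ip (G v) v <= hnorm ip v ^+ 2)
  (alpha : R) (Halpha : 0 < alpha <= 1) :
  exists D : V -> V,
    [/\ cancel (fun v => (1 - alpha) *: G v + alpha *: v) D,
         cancel D (fun v => (1 - alpha) *: G v + alpha *: v),
         bounded_linear_op ip D,
         bounded_linear_op ip (fun v => D (G v))
       & bounded_linear_op ip (fun v => v - D (G v))] /\
    [/\ opnorm_le ip D alpha^-1,
         opnorm_le ip (fun v => D (G v)) 1
       & opnorm_le ip (fun v => v - D (G v)) 1].
Proof.
case/andP: Halpha => alpha_gt0 alpha_le1; have [G_lin _] := HGbdd.
pose D := convex_filter_inv Hip Hcomplete G_lin HGsa HGpos alpha_gt0 alpha_le1.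
have D_lin : is_linear_op D := convex_filter_inv_lin _ _ _ _ _ _ _.
have D_le : opnorm_le ip D alpha^-1 := opnorm_convex_filter_inv _ _ _ _ _ _ _.
have DG_le : opnorm_le ip (fun v => D (G v)) 1 := opnorm_convex_filter_inv_G _ _ _ _ _ _ _.
have IDG_le : opnorm_le ip (fun v => v - D (G v)) 1 :=
  opnorm_id_sub_convex_filter_inv_G _ _ _ _ _ _ _.
exists D; split; split => //.
- exact: convex_filterK.
- exact: convex_filter_invK.
- exact: opnorm_le_bounded D_lin D_le.
- exact: opnorm_le_bounded (lin_op_comp D_lin G_lin) DG_le.
- exact: opnorm_le_bounded (lin_op_id_sub (lin_op_comp D_lin G_lin)) IDG_le.
Qed.
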